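(* The Shapley–Shubik index satisfies the strong minimum-power blocker postulate. For every SVG $\mathcal{G}=(N,\mathcal{W})$: (1) if $S\in\mathcal{W}$ and $b\in S$ is a YES-blocker, then $SS_b\ge 1/|S|$; (2) if $T\notin\mathcal{W}$ and $b\in N\setminus T$ is a NO-blocker, then $SS_b\ge 1/|N\setminus T|$. (Here $1$ is the Shapley–Shubik index of a dictator in a dictator-rule game.)
   Context: A simple voting game (SVG) is a pair $\mathcal{G}=(N,\mathcal{W})$ with $N$ a nonempty finite set of $n$ players and $\mathcal{W}\subseteq 2^N$ monotone, $\emptyset\notin\mathcal{W}$, $N\in\mathcal{W}$. Player $k$ is YES-decisive in $S$ if $k\in S\in\mathcal{W}$ and $S\setminus\{k\}\notin\mathcal{W}$. The Shapley–Shubik index is $$SS_k=\sum_{S:\ k\text{ YES-decisive in }S}\frac{(|S|-1)!\,(n-|S|)!}{n!}.$$ Blockers: $b$ is a YES-blocker if $b\in S$ for all $S\in\mathcal{W}$, and a NO-blocker if $b\notin S$ for all $S\notin\mathcal{W}$. *)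

From mathcomp Require Import all_boot all_order all_algebra.
Set Implicit Arguments. Unset Strict Implicit. Unset Printing Implicit Defensive.
Import Order.TTheory GRing.Theory Num.Theory.
Local Open Scope ring_scope.

(* A simple voting game on the finite player set N = [set: T]
   (n = #|T|), given by its set of winning coalitions W. *)
Definition is_SVG (T : finType) (W : pred {set T}) : Prop :=
  (forall S U : {set T}, S \subset U -> W S -> W U) /\
  ~~ W set0 /\ W [set: T].

Definition yes_decisive (T : finType) (W : pred {set T}) (k : T) (S : {set T}) : bool :=
  [&& k \in S, W S & ~~ W (S :\ k)].

Definition SS (T : finType) (W : pred {set T}) (k : T) : rat :=
  \sum_(S : {set T} | yes_decisive W k S)
     (((#|S|.-1)`! * (#|T| - #|S|)`!)%:R / (#|T|`!)%:R).

Definition yes_blocker (T : finType) (W : pred {set T}) (b : T) : Prop :=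
  forall S : {set T}, W S -> b \in S.

Definition no_blocker (T : finType) (W : pred {set T}) (b : T) : Prop :=
  forall S : {set T}, ~~ W S -> b \notin S.

From mathcomp Require Import all_boot all_order all_algebra.
From mathcomp Require Import zify ring.
Import Order.TTheory GRing.Theory Num.Theory.
Local Open Scope ring_scope.

(* In case (1) b is decisive in every coalition X containing S, and in case (2)
   in every X with b \in X \subset b |: U.  In the random-order reading of the
   Shapley--Shubik index these coalitions account for the orders in which b
   comes last among S, resp. first among ~: U, which have probability 1/|S|,
   resp. 1/|~: U|.  Grouping the coalitions by size, this is the identity
   \sum_j 'C(m, j) (s + j - 1)! (m - j)! = (s + m)! / s,
   a consequence of the hockey-stick identity. *)

Lemma sum_bin_hockey k m : (\sum_(j < m.+1) 'C(k + j, j) = 'C(k + m.+1, m))%N.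
Proof.
elim: m => [|m IH]; first by rewrite big_ord1 addn0 !bin0.
by rewrite big_ord_recr /= IH [in RHS]addnS binS addnC.
Qed.

Lemma sum_bin_fact_shift s m : (0 < s)%N ->
  (s * \sum_(j < m.+1) 'C(m, j) * (s + j).-1`! * (m - j)`! = (s + m)`!)%N.
Proof.
case: s => // s _.
have termE (j : 'I_m.+1) :
    ('C(m, j) * (s.+1 + j).-1`! * (m - j)`! = 'C(s + j, j) * s`! * m`!)%N.
  have Bm := bin_fact (ltn_ord j : (j <= m)%N).
  have Bs := @bin_fact (s + j) j (leq_addl _ _); rewrite addnK in Bs.
  apply/eqP; rewrite -(eqn_pmul2r (fact_gt0 j)); apply/eqP.
  by rewrite -Bm -Bs; ring.
rewrite (eq_bigr _ (fun j _ => termE j)) -!big_distrl /= sum_bin_hockey.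
have Bsm := @bin_fact (s + m.+1) m ltac:(lia).
rewrite (_ : s + m.+1 - m = s.+1)%N in Bsm; last by lia.
by rewrite addSnnS -Bsm factS; ring.
Qed.

Section SumOverSets.

Variables (R : nmodType) (T : finType).

Lemma sum_subset_card (D : {set T}) (G : nat -> R) :
  \sum_(Y : {set T} | Y \subset D) G #|Y| =
  \sum_(j < #|D|.+1) G j *+ 'C(#|D|, j).
Proof.
rewrite (partition_big (fun Y : {set T} => inord #|Y| : 'I_#|D|.+1) xpredT) //.
apply: eq_bigr => j _.
rewrite (eq_bigl [in [set Y : {set T} | Y \subset D & #|Y| == j]]); last first.
  move=> Y; rewrite inE; case sYD: (Y \subset D) => //=.
  have leYD : (#|Y| <= #|D|)%N by apply: subset_leq_card.
  apply/eqP/eqP => [<-|Yj]; first by rewrite inordK.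
  by apply: val_inj; rewrite /= inordK Yj.
rewrite (eq_bigr (fun _ => G j)); last first.
  by move=> Y; rewrite inE => /andP[_ /eqP->].
by rewrite sumr_const cards_draws.
Qed.

Lemma sum_set_interval_card (A D : {set T}) (G : nat -> R) :
  [disjoint A & D] ->
  \sum_(X : {set T} | (A \subset X) && (X \subset A :|: D)) G #|X| =
  \sum_(j < #|D|.+1) G (#|A| + j)%N *+ 'C(#|D|, j).
Proof.
move=> dAD; rewrite -(sum_subset_card D (fun k => G (#|A| + k)%N)).
rewrite (reindex_onto (fun Y => A :|: Y) (fun X => X :\: A)); last first.
  by move=> X /andP[sAX _]; rewrite setDE setUIr setUCr setIT; apply/setUidPr.
apply: eq_big => Y.
  rewrite setDUl setDv set0U subsetUl subUset subsetUl /= -subDset.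
  apply/andP/idP => [[sYAD /eqP YA] | sYD]; first by rewrite -YA.
  have /setDidPl -> : [disjoint Y & A].
    by rewrite (disjointWl sYD) // disjoint_sym.
  by rewrite sYD eqxx.
rewrite setDUl setDv set0U => /andP[_ /eqP/setDidPl dYA].
by rewrite cardsU disjoint_setI0 1?disjoint_sym // cards0 subn0.
Qed.

End SumOverSets.

Definition ss_weight (n k : nat) : rat := ((k.-1)`! * (n - k)`!)%:R / (n`!)%:R.

Lemma sum_ss_weight_addn n s m : n = (s + m)%N -> (0 < s)%N ->
  \sum_(j < m.+1) ss_weight n (s + j) *+ 'C(m, j) = 1 / s%:R.
Proof.
move=> -> s_gt0; have factE := @sum_bin_fact_shift s m s_gt0.
under eq_bigr => j _.
  rewrite /ss_weight -[_ *+ 'C(m, j)]mulr_natl mulrA -natrM mulnA.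
  rewrite (_ : s + m - (s + j) = m - j)%N; last by lia.
over.
rewrite -mulr_suml -natr_sum -factE natrM.
set N := (\sum_(_ < _) _)%N in factE *.
have N_neq0 : (N%:R : rat) != 0.
  by rewrite pnatr_eq0 -lt0n -(ltn_pmul2l s_gt0) muln0 factE fact_gt0.
have s_neq0 : (s%:R : rat) != 0 by rewrite pnatr_eq0 -lt0n.
by field; apply/andP.
Qed.

Lemma sum_ss_weight_succ n s m : n = (s + m)%N -> (0 < s)%N ->
  \sum_(j < m.+1) ss_weight n j.+1 *+ 'C(m, j) = 1 / s%:R.
Proof.
move=> n_sm s_gt0; rewrite -(@sum_ss_weight_addn n s m n_sm s_gt0).
rewrite (reindex_inj rev_ord_inj); apply: eq_bigr => -[j /= lt_jm] _.
rewrite subSS bin_sub // /ss_weight mulnC.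
by congr (_%:R / _ *+ _); congr (_`! * _`!)%N; lia.
Qed.

Lemma SS_ge_sum (T : finType) (W : pred {set T}) b (P : pred {set T}) :
  (forall X, P X -> yes_decisive W b X) ->
  \sum_(X | P X) ss_weight #|T| #|X| <= SS W b.
Proof.
move=> decP; rewrite /SS big_mkcond [leRHS]big_mkcond /=.
apply: ler_sum => X _; case PX: (P X); first by rewrite decP.
by case: ifP => // _; rewrite divr_ge0 ?ler0n.
Qed.

Section Blockers.

Variables (T : finType) (W : pred {set T}).
Hypothesis W_mono : forall S U : {set T}, S \subset U -> W S -> W U.

Lemma SS_yes_blocker_ge S b :
  W S -> b \in S -> yes_blocker W b -> 1 / #|S|%:R <= SS W b.
Proof.
move=> WS bS yes_b.
have S_gt0 : (0 < #|S|)%N by apply/card_gt0P; exists b.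
rewrite -(@sum_ss_weight_addn _ _ #|~: S| (esym (cardsC S)) S_gt0).
have dSS' : [disjoint S & ~: S] by rewrite disjoints_subset setCK.
rewrite -(@sum_set_interval_card _ _ S (~: S) (ss_weight #|T|) dSS').
apply: SS_ge_sum => X /andP[sSX _].
rewrite /yes_decisive (subsetP sSX b bS) (W_mono _ _ sSX WS) /=.
by apply/negP => /yes_b; rewrite !inE eqxx.
Qed.

Lemma SS_no_blocker_ge U b :
  ~~ W U -> b \in ~: U -> no_blocker W b -> 1 / #|~: U|%:R <= SS W b.
Proof.
move=> nWU bU no_b.
have U'_gt0 : (0 < #|~: U|)%N by apply/card_gt0P; exists b.
rewrite -(@sum_ss_weight_succ #|T| _ #|U| _ U'_gt0); last first.
  by rewrite addnC cardsC.
have dbU : [disjoint [set b] & U] by rewrite disjoints1 -in_setC.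
rewrite (eq_bigr (fun j : 'I_#|U|.+1 =>
                    ss_weight #|T| (#|[set b]| + j) *+ 'C(#|U|, j)));
  last by move=> j _; rewrite cards1.
rewrite -(@sum_set_interval_card _ _ [set b] U (ss_weight #|T|) dbU).
apply: SS_ge_sum => X /andP[sbX sXU].
have bX : b \in X by rewrite sub1set in sbX.
rewrite /yes_decisive bX /=.
have -> : W X by apply/negPn/negP => /no_b; rewrite bX.
by apply: contra nWU => WXb; apply: W_mono WXb; rewrite subDset.
Qed.

End Blockers.

Theorem theorem5 (T : finType) (W : pred {set T}) :
  is_SVG W ->
  (forall (S : {set T}) (b : T),
      W S -> b \in S -> yes_blocker W b ->
      SS W b >= 1 / (#|S|)%:R) /\
  (forall (U : {set T}) (b : T),
      ~~ W U -> b \in ~: U -> no_blocker W b ->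
      SS W b >= 1 / (#|~: U|)%:R).
Proof.
move=> [W_mono _]; split.
- exact: (@SS_yes_blocker_ge T W W_mono).
- exact: (@SS_no_blocker_ge T W W_mono).
Qed.
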